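(* There exist an argumentation semantics $\sigma$ whose extensions are maximal conflict-free sets (w.r.t. set inclusion) and argumentation frameworks $AF=(AR,Attacks)$, $AF'=(AR',Attacks')$ with $AF\preceq_N AF'$ such that the following statement does NOT hold: if for all $E\in\sigma(AF)$ and all $E'\in\sigma(AF')$ we have $E'\not\subseteq AR$ or $E'=E$, then for every $E\in\sigma(AF)$, $$\{(a,b)\in Attacks': a\in AR'\setminus AR,\ b\in E\}=\emptyset\ \Longrightarrow\ \forall E'\in\sigma(AF'),\ E\subseteq E'.$$
   Context: An argumentation framework is a pair $(AR,Attacks)$ with $AR$ a finite set and $Attacks\subseteq AR\times AR$; $a$ attacks $b$ iff $(a,b)\in Attacks$. A set $S$ is conflict-free iff no element of $S$ attacks an element of $S$. An argumentation semantics $\sigma$ assigns to each argumentation framework a set $\sigma(AF)$ of subsets of $AR$; ''$\sigma$'s extensions are maximal conflict-free sets'' means that for every $AF$, every $E\in\sigma(AF)$ is a $\subseteq$-maximal conflict-free subset of the argument set of $AF$. $AF\preceq_N AF'$ (normal expansion) iff $AR\subseteq AR'$, $Attacks\subseteq Attacks'$ and no $(a,b)\in Attacks'\setminus Attacks$ has both $a,b\in AR$. *)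

From HB Require Import structures.
From mathcomp Require Import all_boot.
From mathcomp Require Import finmap.
Set Implicit Arguments. Unset Strict Implicit. Unset Printing Implicit Defensive.
Local Open Scope fset_scope.

Record AF := mkAF { AR : {fset nat}; Attacks : {fset (nat * nat)} }.

Definition wf_AF (F : AF) : Prop :=
  forall a b, (a, b) \in Attacks F -> a \in AR F /\ b \in AR F.

Definition conflict_free (F : AF) (S : {fset nat}) : Prop :=
  forall a b, a \in S -> b \in S -> (a, b) \notin Attacks F.

Definition maximal_cf (F : AF) (S : {fset nat}) : Prop :=
  [/\ S `<=` AR F, conflict_free F S &
      forall T : {fset nat}, S `<=` T -> T `<=` AR F -> conflict_free F T -> T = S].

Definition semantics := AF -> {fset nat} -> Prop.

Definition maxcf_semantics (sigma : semantics) : Prop :=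
  forall F, wf_AF F -> forall E, sigma F E -> maximal_cf F E.

Definition normal_expansion (F F' : AF) : Prop :=
  [/\ AR F `<=` AR F', Attacks F `<=` Attacks F' &
      forall a b, (a, b) \in Attacks F' -> (a, b) \notin Attacks F ->
        ~ (a \in AR F /\ b \in AR F)].

(* Counterexample with the naive semantics (all maximal conflict-free sets).
   Take AF = ({1}, {}) and expand it normally by a new argument 2 attacked
   by 1.  In a normal expansion conflict-freeness of old arguments does not
   change, so every naive extension of AF' lying inside AR is a naive
   extension of AF, namely {1}; hence the premise holds.  No new argument
   attacks {1}, yet {2} is a naive extension of AF' not containing {1}. *)
From mathcomp Require Import all_boot.
From mathcomp Require Import finmap.
Set Implicit Arguments. Unset Strict Implicit.
Local Open Scope fset_scope.

Section NormalExpansion.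

Variables F F' : AF.
Hypothesis FF' : normal_expansion F F'.

Lemma normal_expansion_conflict_free S :
  S `<=` AR F -> conflict_free F' S <-> conflict_free F S.
Proof.
case: FF' => _ /fsubsetP subAtt newAtt SF; split=> cfS a b aS bS.
  by apply/negP=> /subAtt; apply/negP; exact: cfS.
apply/negP=> ab; apply: newAtt ab (cfS a b aS bS) _.
by split; apply: (fsubsetP SF).
Qed.

Lemma normal_expansion_maximal_cf E :
  maximal_cf F' E -> E `<=` AR F -> maximal_cf F E.
Proof.
case=> _ cfE maxE EF; split=> //.
  by rewrite -normal_expansion_conflict_free.
move=> T ET TF cfT; apply: maxE => //.
  by apply: fsubset_trans TF _; case: FF'.
by rewrite normal_expansion_conflict_free.
Qed.

End NormalExpansion.

Lemma maximal_cfE_conflict_free_AR F E :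
  conflict_free F (AR F) -> maximal_cf F E <-> E = AR F.
Proof.
move=> cfAR; split=> [[EF _ maxE] | ->]; first by apply/esym/maxE.
split=> [|//|T ART TF _]; first exact: fsubset_refl.
by apply/eqP; rewrite eqEfsubset ART TF.
Qed.

Definition single_AF := mkAF [fset 1%N] fset0.
Definition attacked_AF := mkAF [fset 1%N; 2%N] [fset (1%N, 2%N)].

Lemma conflict_free_single_AF : conflict_free single_AF (AR single_AF).
Proof. by move=> a b _ _; rewrite in_fset0. Qed.

Lemma maximal_cf_attacked_AF : maximal_cf attacked_AF [fset 2%N].
Proof.
split=> /=.
- by rewrite fsub1set !inE orbT.
- by move=> a b /fset1P -> /fset1P ->; rewrite inE.
move=> T ET TF cfT; apply/eqP; rewrite eqEfsubset ET andbT.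
apply/fsubsetP=> x xT; move: (fsubsetP TF x xT); rewrite !inE => /orP[/eqP x1|//].
have := cfT x 2%N xT (fsubsetP ET 2%N (fset11 _)).
by rewrite x1 inE eqxx.
Qed.

Theorem proposition54 :
  exists sigma : semantics, maxcf_semantics sigma /\
  exists F F' : AF, [/\ wf_AF F, wf_AF F', normal_expansion F F' &
    ~ ((forall E E', sigma F E -> sigma F' E' -> ~ (E' `<=` AR F) \/ E' = E) ->
       forall E, sigma F E ->
         (forall a b, (a, b) \in Attacks F' -> a \in AR F' -> a \notin AR F ->
            b \notin E) ->
         forall E', sigma F' E' -> E `<=` E')].
Proof.
exists maximal_cf; split=> [// | ]; exists single_AF, attacked_AF.
have expansion : normal_expansion single_AF attacked_AF.
  split=> /=; [by rewrite fsub1set !inE eqxx | exact: fsub0set |].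
  by move=> a b /fset1P[-> ->] _ [_]; rewrite inE.
have naive_single E : maximal_cf single_AF E <-> E = [fset 1%N].
  exact: maximal_cfE_conflict_free_AR conflict_free_single_AF.
split=> //; first by move=> a b /fset1P[-> ->]; rewrite !inE.
move=> premise.
have no_new_old_extension E E' : maximal_cf single_AF E ->
    maximal_cf attacked_AF E' -> ~ (E' `<=` [fset 1%N]) \/ E' = E.
  move=> /naive_single -> E'max.
  have [E'F|] := boolP (E' `<=` [fset 1%N]); last by move/negP; left.
  by right; apply/naive_single; exact: (normal_expansion_maximal_cf expansion E'max).
have no_new_attacker a b : (a, b) \in [fset (1%N, 2%N)] ->
    a \in [fset 1%N; 2%N] -> a \notin [fset 1%N] -> b \notin [fset 1%N].
  by move=> /fset1P[-> ->]; rewrite !inE.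
have := premise no_new_old_extension _ (proj2 (naive_single _) erefl)
  no_new_attacker _ maximal_cf_attacked_AF.
by move=> /fsubsetP /(_ 1%N); rewrite !inE => /(_ isT).
Qed.
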